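(* Let $\mu>0$, $\mathbf X_0\in\mathbb R^{n\times p}$ arbitrary, and fix $r\in(0,1)$. Over the set $\Gamma\cap\{\mathbf w:\|\mathbf w\|\ge r\}$, the function $\mathbf w\mapsto\mathbf w^*\nabla^2g(\mathbf w;\mathbf X_0)\mathbf w/\|\mathbf w\|^2$ is $L$-Lipschitz with $$L\le\frac{16n^3}{\mu^2}\|\mathbf X_0\|_\infty^3+\frac{8n^{3/2}}{\mu r}\|\mathbf X_0\|_\infty^2+\frac{48n^{5/2}}{\mu}\|\mathbf X_0\|_\infty^2+96n^{5/2}\|\mathbf X_0\|_\infty.$$
   Context: $h_\mu(z)=\mu\log\cosh(z/\mu)$. For $\mathbf Y\in\mathbb R^{n\times p}$ with columns $\mathbf y_k$, $f(\mathbf q;\mathbf Y)=\frac1p\sum_k h_\mu(\mathbf q^*\mathbf y_k)$; for $\mathbf w$ in the open unit ball of $\mathbb R^{n-1}$, $\mathbf q(\mathbf w)=(\mathbf w,\sqrt{1-\|\mathbf w\|^2})$ and $g(\mathbf w;\mathbf Y)=f(\mathbf q(\mathbf w);\mathbf Y)$; $\nabla^2$ is the Hessian in $\mathbf w$. $\Gamma=\{\mathbf w\in\mathbb R^{n-1}:\|\mathbf w\|<\sqrt{(4n-1)/(4n)}\}$. $\|\mathbf X\|_\infty$ denotes the maximum absolute value of the entries of $\mathbf X$. Lipschitz is with respect to the Euclidean norm on $\mathbf w$. *)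

From Stdlib Require Import Reals Lra List Arith ClassicalEpsilon.
Import ListNotations.
Open Scope R_scope.

(* Vectors in R^m are functions nat -> R, only indices < m are meaningful. *)
Definition vec := nat -> R.

Definition sumR (m : nat) (f : nat -> R) : R :=
  fold_right Rplus 0 (map f (seq 0 m)).

Definition norm2 (m : nat) (w : vec) : R := sqrt (sumR m (fun i => w i * w i)).

Definition h_mu (mu z : R) : R := mu * ln (cosh (z / mu)).

Definition f_obj (mu : R) (n p : nat) (Y : nat -> nat -> R) (q : vec) : R :=
  / INR p * sumR p (fun k => h_mu mu (sumR n (fun i => q i * Y i k))).

Definition q_of (n : nat) (w : vec) : vec :=
  fun i => if (i <? n - 1)%nat then w i
           else sqrt (1 - norm2 (n - 1) w ^ 2).

Definition g_obj (mu : R) (n p : nat) (Y : nat -> nat -> R) (w : vec) : R :=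
  f_obj mu n p Y (q_of n w).

Definition deriv1 (f : R -> R) (x : R) : R :=
  epsilon (inhabits 0) (fun l => derivable_pt_lim f x l).

Definition upd (w : vec) (i : nat) (t : R) : vec :=
  fun j => if Nat.eqb j i then t else w j.

Definition partial (F : vec -> R) (i : nat) (w : vec) : R :=
  deriv1 (fun t => F (upd w i t)) (w i).

Definition hessian (F : vec -> R) (w : vec) (i j : nat) : R :=
  partial (fun v => partial F j v) i w.

Definition hess_quad (m : nat) (F : vec -> R) (w : vec) : R :=
  sumR m (fun i => sumR m (fun j => w i * hessian F w i j * w j)).

Definition max_abs (n p : nat) (X : nat -> nat -> R) : R :=
  fold_right Rmax 0
    (flat_map (fun i => map (fun k => Rabs (X i k)) (seq 0 p)) (seq 0 n)).

Definition in_Gamma (n : nat) (w : vec) : Prop :=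
  norm2 (n - 1) w < sqrt ((4 * INR n - 1) / (4 * INR n)).

From Stdlib Require Import Reals Lra Lia Psatz List ClassicalEpsilon FunctionalExtensionality.
Open Scope R_scope.

(* In the chart q(w) = (w, s(w)), s(w) = sqrt(1 - |w|^2), write z_k(w) = q(w)^* x_k.
   Differentiating twice gives the Rayleigh quotient of the Hessian in closed form,
     w^* H w / |w|^2 = 1/p sum_k [ (1 - tanh^2(z_k/mu))/mu c_k^2 - tanh(z_k/mu) x_nk / s^3 ],
   where c_k = <w/|w|, x_k'> - |w| x_nk / s is the derivative of z_k in the radial direction.
   On Gamma we have s > 1/(2 sqrt n), and |w| >= r makes w |-> w/|w| (1/r)-Lipschitz; hence
   z_k, c_k, s and 1/s^3 are bounded and Lipschitz with explicit constants, while tanh and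
   tanh^2 are 1-Lipschitz, so the product rule bounds each summand.  The stated constants
   follow from sqrt(n-1) + 2 sqrt n <= 2n. *)

(** * Finite sums and the Euclidean norm *)

Lemma fold_right_Rplus_acc l a : fold_right Rplus a l = fold_right Rplus 0 l + a.
Proof. induction l; simpl; [lra|rewrite IHl; lra]. Qed.

Lemma sumR_S m f : sumR (S m) f = sumR m f + f m.
Proof.
  unfold sumR. rewrite seq_S, map_app, fold_right_app. simpl.
  rewrite fold_right_Rplus_acc. lra.
Qed.

Lemma sumR_ext m f g : (forall i, (i < m)%nat -> f i = g i) -> sumR m f = sumR m g.
Proof.
  induction m; intros H; [reflexivity|]. rewrite !sumR_S, IHm, H; [reflexivity|lia|].
  intros; apply H; lia.
Qed.

Lemma sumR_plus m f g : sumR m (fun i => f i + g i) = sumR m f + sumR m g.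
Proof. induction m; [unfold sumR; simpl; lra|rewrite !sumR_S, IHm; lra]. Qed.

Lemma sumR_minus m f g : sumR m (fun i => f i - g i) = sumR m f - sumR m g.
Proof. induction m; [unfold sumR; simpl; lra|rewrite !sumR_S, IHm; lra]. Qed.

Lemma sumR_scal m c f : sumR m (fun i => c * f i) = c * sumR m f.
Proof. induction m; [unfold sumR; simpl; lra|rewrite !sumR_S, IHm; lra]. Qed.

Lemma sumR_scalr m c f : sumR m (fun i => f i * c) = sumR m f * c.
Proof. induction m; [unfold sumR; simpl; lra|rewrite !sumR_S, IHm; lra]. Qed.

Lemma sumR_const m c : sumR m (fun _ => c) = INR m * c.
Proof. induction m; [unfold sumR; simpl; lra|rewrite sumR_S, IHm, S_INR; lra]. Qed.

Lemma sumR_swap m q F :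
  sumR m (fun i => sumR q (fun j => F i j)) = sumR q (fun j => sumR m (fun i => F i j)).
Proof.
  induction m.
  - rewrite (sumR_ext q (fun j => sumR 0 _) (fun _ => 0)) by reflexivity.
    rewrite sumR_const; unfold sumR; simpl; lra.
  - rewrite sumR_S, IHm, <- sumR_plus. apply sumR_ext; intros; rewrite sumR_S; reflexivity.
Qed.

Lemma sumR_delta m i a : (i < m)%nat -> sumR m (fun j => if Nat.eqb j i then a else 0) = a.
Proof.
  induction m; intros H; [lia|]. rewrite sumR_S.
  destruct (Nat.eq_dec i m) as [->|Hne].
  - rewrite Nat.eqb_refl, (sumR_ext _ _ (fun _ => 0)), sumR_const; [lra|].
    intros j Hj. destruct (Nat.eqb_spec j m); [lia|reflexivity].
  - rewrite IHm by lia. destruct (Nat.eqb_spec m i); [lia|lra].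
Qed.

Lemma sumR_le m f g : (forall i, (i < m)%nat -> f i <= g i) -> sumR m f <= sumR m g.
Proof.
  induction m; intros H; [unfold sumR; simpl; lra|]. rewrite !sumR_S.
  assert (f m <= g m) by (apply H; lia).
  assert (sumR m f <= sumR m g) by (apply IHm; intros; apply H; lia). lra.
Qed.

Lemma sumR_nonneg m f : (forall i, (i < m)%nat -> 0 <= f i) -> 0 <= sumR m f.
Proof.
  intros H. replace 0 with (sumR m (fun _ => 0)) by (rewrite sumR_const; ring).
  apply sumR_le. exact H.
Qed.

Lemma sumR_abs m f : Rabs (sumR m f) <= sumR m (fun i => Rabs (f i)).
Proof.
  induction m; [unfold sumR; simpl; rewrite Rabs_R0; lra|]. rewrite !sumR_S.
  eapply Rle_trans; [apply Rabs_triang|]. lra.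
Qed.

Lemma average_abs_le p f c : 0 <= c -> (forall k, (k < p)%nat -> Rabs (f k) <= c) ->
  Rabs (/ INR p * sumR p f) <= c.
Proof.
  intros Hc Hf. destruct p as [|p]; [simpl; rewrite Rmult_0_r, Rabs_R0; exact Hc|].
  assert (Hp : 0 < INR (S p)) by (apply lt_0_INR; lia).
  rewrite Rabs_mult, Rabs_right by (apply Rle_ge; left; apply Rinv_0_lt_compat; exact Hp).
  apply Rle_trans with (/ INR (S p) * (INR (S p) * c)).
  - apply Rmult_le_compat_l; [left; apply Rinv_0_lt_compat; exact Hp|].
    eapply Rle_trans; [apply sumR_abs|]. rewrite <- sumR_const. apply sumR_le. exact Hf.
  - right. field. lra.
Qed.

(* 2 S ab <= 2 sqrt(AB) |ab| <= A b^2 + B a^2. *)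
Lemma cauchy_schwarz_step S A B a b : 0 <= A -> 0 <= B -> S * S <= A * B ->
  (S + a * b) * (S + a * b) <= (A + a * a) * (B + b * b).
Proof.
  intros HA HB HS.
  set (x := 2 * S * (a * b)). set (Y := A * (b * b) + B * (a * a)).
  assert (Hx : x * x <= Y * Y).
  { unfold x, Y. pose proof (Rle_0_sqr (A * (b * b) - B * (a * a))).
    pose proof (Rle_0_sqr (a * b)). unfold Rsqr in *.
    assert (S * S * ((a * b) * (a * b)) <= A * B * ((a * b) * (a * b))) by nra. nra. }
  assert (HY : 0 <= Y) by (unfold Y; nra).
  assert (x <= Y) by (destruct (Rle_dec x Y); [assumption|nra]).
  unfold x, Y in *. nra.
Qed.

Lemma cauchy_schwarz m f g :
  sumR m (fun i => f i * g i) * sumR m (fun i => f i * g i)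
  <= sumR m (fun i => f i * f i) * sumR m (fun i => g i * g i).
Proof.
  induction m; [unfold sumR; simpl; lra|]. rewrite !sumR_S.
  apply cauchy_schwarz_step; auto; apply sumR_nonneg; intros; nra.
Qed.

Definition sqnorm (m : nat) (v : vec) : R := sumR m (fun i => v i * v i).
Definition dot (m : nat) (v w : vec) : R := sumR m (fun i => v i * w i).

Lemma sqnorm_nonneg m v : 0 <= sqnorm m v.
Proof. apply sumR_nonneg; intros; nra. Qed.

Lemma norm2_nonneg m v : 0 <= norm2 m v.
Proof. apply sqrt_pos. Qed.

Lemma norm2_mul_norm2 m v : norm2 m v * norm2 m v = sqnorm m v.
Proof. apply sqrt_sqrt, sqnorm_nonneg. Qed.

Lemma norm2_pow2 m v : norm2 m v ^ 2 = sqnorm m v.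
Proof. rewrite <- norm2_mul_norm2. ring. Qed.

Lemma abs_le_of_sq a b : 0 <= b -> a * a <= b * b -> Rabs a <= b.
Proof.
  intros Hb H. apply Rabs_le. split; nra.
Qed.

Lemma sqnorm_sub m v w : sqnorm m (fun i => v i - w i) = sqnorm m v + sqnorm m w - 2 * dot m v w.
Proof.
  unfold sqnorm, dot. rewrite <- sumR_scal, <- sumR_plus, <- sumR_minus.
  apply sumR_ext; intros; ring.
Qed.

Lemma dot_le_norm2 m v w : dot m v w <= norm2 m v * norm2 m w.
Proof.
  pose proof (norm2_nonneg m v). pose proof (norm2_nonneg m w).
  assert (Rabs (dot m v w) <= norm2 m v * norm2 m w).
  { apply abs_le_of_sq; [nra|].
    replace (norm2 m v * norm2 m w * (norm2 m v * norm2 m w)) with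
      ((norm2 m v * norm2 m v) * (norm2 m w * norm2 m w)) by ring.
    rewrite !norm2_mul_norm2. apply cauchy_schwarz. }
  pose proof (Rle_abs (dot m v w)). lra.
Qed.

Lemma norm2_sub_reverse m v w :
  Rabs (norm2 m v - norm2 m w) <= norm2 m (fun i => v i - w i).
Proof.
  apply abs_le_of_sq; [apply norm2_nonneg|]. rewrite norm2_mul_norm2, sqnorm_sub.
  pose proof (dot_le_norm2 m v w). rewrite <- !norm2_mul_norm2. nra.
Qed.

(* |v/|v| - w/|w||^2 = 2 - 2<v,w>/(|v||w|) <= |v - w|^2 / (|v||w|). *)
Lemma norm2_normalize_sub m v w r : 0 < r -> r <= norm2 m v -> r <= norm2 m w ->
  norm2 m (fun i => v i / norm2 m v - w i / norm2 m w) <= norm2 m (fun i => v i - w i) / r.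
Proof.
  intros Hr Hv Hw. set (a := norm2 m v) in *. set (b := norm2 m w) in *.
  set (d := norm2 m (fun i => v i - w i)).
  assert (Hd : 0 <= d) by apply norm2_nonneg.
  assert (Hdr : 0 <= d / r) by (unfold Rdiv; apply Rmult_le_pos; [lra|left; apply Rinv_0_lt_compat; lra]).
  apply Rsqr_incr_0_var; [|exact Hdr]. unfold Rsqr. rewrite norm2_mul_norm2.
  assert (E : sqnorm m (fun i => v i / a - w i / b)
              = (2 * (a * b) - 2 * dot m v w) / (a * b)).
  { transitivity (sqnorm m v / (a * a) + sqnorm m w / (b * b) - 2 * dot m v w / (a * b)).
    - unfold sqnorm, dot, Rdiv.
      rewrite <- !sumR_scalr, <- sumR_scal, <- sumR_scalr, <- sumR_plus, <- sumR_minus.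
      apply sumR_ext; intros; field; lra.
    - unfold a, b. rewrite <- !norm2_mul_norm2. fold a b. field; lra. }
  assert (Hdd : d * d = a * a + b * b - 2 * dot m v w).
  { unfold d. rewrite norm2_mul_norm2, sqnorm_sub. unfold a, b. rewrite !norm2_mul_norm2. ring. }
  pose proof (dot_le_norm2 m v w) as Hdot. fold a b in Hdot.
  rewrite E.
  replace (d / r * (d / r)) with (d * d / (r * r)) by (field; lra).
  apply Rle_trans with (d * d / (a * b)).
  - pose proof (Rle_0_sqr (a - b)). unfold Rsqr in *.
    apply Rmult_le_compat_r; [left; apply Rinv_0_lt_compat; nra|nra].
  - apply Rmult_le_compat_l; [nra|]. apply Rinv_le_contravar; nra.
Qed.

Lemma max_abs_nonneg n p X : 0 <= max_abs n p X.
Proof.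
  unfold max_abs. induction (flat_map _ _); simpl; [lra|].
  eapply Rle_trans; [exact IHl|apply Rmax_r].
Qed.

Lemma max_abs_ge n p X i k : (i < n)%nat -> (k < p)%nat -> Rabs (X i k) <= max_abs n p X.
Proof.
  intros Hi Hk.
  assert (Hin : In (Rabs (X i k))
    (flat_map (fun i => map (fun k => Rabs (X i k)) (seq 0 p)) (seq 0 n))).
  { apply in_flat_map. exists i. split; [apply in_seq; lia|].
    apply in_map_iff. exists k. split; [reflexivity|apply in_seq; lia]. }
  unfold max_abs. induction (flat_map _ _); simpl in *; [tauto|].
  destruct Hin as [->|Hin]; [apply Rmax_l|].
  eapply Rle_trans; [apply IHl; exact Hin|apply Rmax_r].
Qed.

Lemma dot_col_le n p X k v : (k < p)%nat ->
  Rabs (sumR (n-1) (fun i => v i * X i k))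
  <= norm2 (n-1) v * (sqrt (INR (n-1)) * max_abs n p X).
Proof.
  intros Hk. set (M := max_abs n p X). pose proof (max_abs_nonneg n p X) as HM.
  apply abs_le_of_sq.
  { apply Rmult_le_pos; [apply norm2_nonneg|apply Rmult_le_pos; [apply sqrt_pos|exact HM]]. }
  eapply Rle_trans; [apply cauchy_schwarz|].
  assert (HX : sumR (n-1) (fun i => X i k * X i k) <= INR (n-1) * (M * M)).
  { rewrite <- sumR_const. apply sumR_le. intros i Hi.
    pose proof (max_abs_ge n p X i k ltac:(lia) Hk) as Hik. fold M in Hik.
    assert (X i k * X i k = Rabs (X i k) * Rabs (X i k))
      by (rewrite <- Rabs_mult; symmetry; apply Rabs_pos_eq; nra).
    pose proof (Rabs_pos (X i k)). nra. }
  replace (norm2 (n-1) v * (sqrt (INR (n-1)) * M) * (norm2 (n-1) v * (sqrt (INR (n-1)) * M)))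
    with ((norm2 (n-1) v * norm2 (n-1) v) * (sqrt (INR (n-1)) * sqrt (INR (n-1)) * (M * M)))
    by ring.
  rewrite norm2_mul_norm2, sqrt_sqrt by apply pos_INR. fold (sqnorm (n-1) v).
  apply Rmult_le_compat_l; [apply sqnorm_nonneg|exact HX].
Qed.

(** * Derivatives *)

Lemma deriv1_eq f x l : derivable_pt_lim f x l -> deriv1 f x = l.
Proof.
  intros H. unfold deriv1. apply (uniqueness_limite f x); [|exact H].
  apply (epsilon_spec (inhabits 0) (fun l => derivable_pt_lim f x l)). exists l; exact H.
Qed.

Lemma derivable_pt_lim_local f g x l d : 0 < d ->
  (forall t, Rabs (t - x) < d -> f t = g t) ->
  derivable_pt_lim g x l -> derivable_pt_lim f x l.
Proof.
  intros Hd Heq Hg eps Heps. destruct (Hg eps Heps) as [del Hdel].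
  assert (Hm : 0 < Rmin del d) by (apply Rmin_pos; [apply cond_pos|lra]).
  exists (mkposreal _ Hm). intros h Hh Hhd. simpl in Hhd.
  rewrite !Heq.
  - apply Hdel; auto. eapply Rlt_le_trans; [exact Hhd|apply Rmin_l].
  - unfold Rminus; rewrite Rplus_opp_r, Rabs_R0; lra.
  - replace (x + h - x) with h by ring. eapply Rlt_le_trans; [exact Hhd|apply Rmin_r].
Qed.

Lemma derivable_pt_lim_sumR m (F : nat -> R -> R) F' x :
  (forall i, (i < m)%nat -> derivable_pt_lim (F i) x (F' i)) ->
  derivable_pt_lim (fun t => sumR m (fun i => F i t)) x (sumR m F').
Proof.
  induction m; intros H.
  - apply (derivable_pt_lim_const 0).
  - rewrite sumR_S.
    apply (derivable_pt_lim_ext (fun t => sumR m (fun i => F i t) + F m t)).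
    { intros; rewrite sumR_S; reflexivity. }
    apply (derivable_pt_lim_plus (fun t => sumR m (fun i => F i t)) (F m));
      [apply IHm|apply H]; auto.
Qed.

Lemma cosh_pos x : 0 < cosh x.
Proof. unfold cosh. pose proof (exp_pos x). pose proof (exp_pos (-x)). lra. Qed.

Lemma tanh_bound x : -1 < tanh x < 1.
Proof.
  unfold tanh. pose proof (cosh_pos x).
  assert (- cosh x < sinh x < cosh x).
  { unfold cosh, sinh in *. pose proof (exp_pos x). pose proof (exp_pos (-x)). lra. }
  assert (Hi : 0 < / cosh x) by (apply Rinv_0_lt_compat; lra).
  assert (cosh x * / cosh x = 1) by (field; lra).
  unfold Rdiv. split; nra.
Qed.

Lemma derivable_pt_lim_tanh x : derivable_pt_lim tanh x (1 - tanh x ^ 2).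
Proof.
  pose proof (cosh_pos x).
  replace (1 - tanh x ^ 2) with ((cosh x * cosh x - sinh x * sinh x) / (cosh x)²).
  - apply (derivable_pt_lim_div sinh cosh);
      [apply derivable_pt_lim_sinh|apply derivable_pt_lim_cosh|lra].
  - unfold tanh, Rsqr. field. lra.
Qed.

Lemma derivable_pt_lim_h_mu mu z : 0 < mu -> derivable_pt_lim (h_mu mu) z (tanh (z / mu)).
Proof.
  intros Hmu. unfold h_mu. pose proof (cosh_pos (z / mu)).
  replace (tanh (z / mu)) with (mu * (/ cosh (z / mu) * (sinh (z / mu) * (1 / mu))))
    by (unfold tanh; field; lra).
  apply (derivable_pt_lim_scal (fun z => ln (cosh (z / mu)))).
  apply (derivable_pt_lim_comp (fun z => cosh (z / mu)) ln).
  - apply (derivable_pt_lim_comp (fun z => z / mu) cosh).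
    + apply (derivable_pt_lim_div_scal id). apply derivable_pt_lim_id.
    + apply derivable_pt_lim_cosh.
  - apply derivable_pt_lim_ln; assumption.
Qed.

Lemma tanh_lipschitz x y : Rabs (tanh x - tanh y) <= Rabs (x - y).
Proof.
  destruct (MVT_abs tanh (fun c => 1 - tanh c ^ 2) y x) as [c [Hc _]].
  { intros; apply derivable_pt_lim_tanh. }
  rewrite Hc. pose proof (tanh_bound c).
  assert (Rabs (1 - tanh c ^ 2) <= 1) by (apply Rabs_le; nra).
  pose proof (Rabs_pos (x - y)). nra.
Qed.

(* (tanh^2)' = 2 u (1 - u^2) with u = tanh, whose maximum on (-1, 1) is 4/(3 sqrt 3) < 1. *)
Lemma tanh_sq_lipschitz x y : Rabs (tanh x ^ 2 - tanh y ^ 2) <= Rabs (x - y).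
Proof.
  destruct (MVT_abs (fun z => tanh z ^ 2) (fun c => 2 * tanh c * (1 - tanh c ^ 2)) y x)
    as [c [Hc _]].
  { intros c _.
    apply (derivable_pt_lim_ext (fun z => tanh z * tanh z)); [intros; ring|].
    replace (2 * tanh c * (1 - tanh c ^ 2))
      with ((1 - tanh c ^ 2) * tanh c + tanh c * (1 - tanh c ^ 2)) by ring.
    apply derivable_pt_lim_mult; apply derivable_pt_lim_tanh. }
  rewrite Hc. pose proof (tanh_bound c). set (u := tanh c) in *.
  assert (Rabs (2 * u * (1 - u ^ 2)) <= 1).
  { pose proof (Rle_0_sqr (u + 1/2)). pose proof (Rle_0_sqr (u - 1/2)). unfold Rsqr in *.
    apply Rabs_le; split; nra. }
  pose proof (Rabs_pos (x - y)). nra.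
Qed.

(** * The objective in the chart w |-> q(w) *)

Definition qlast (m : nat) (v : vec) : R := sqrt (1 - sqnorm m v).

Definition zcol (n : nat) (X : nat -> nat -> R) (k : nat) (v : vec) : R :=
  sumR (n-1) (fun i => v i * X i k) + qlast (n-1) v * X (n-1)%nat k.

Definition g_chart (mu : R) (n p : nat) (X : nat -> nat -> R) (v : vec) : R :=
  / INR p * sumR p (fun k => h_mu mu (zcol n X k v)).

Lemma g_obj_chart mu n p X : (1 <= n)%nat -> g_obj mu n p X = g_chart mu n p X.
Proof.
  intros Hn. apply functional_extensionality; intros v.
  unfold g_obj, g_chart, f_obj. f_equal. apply sumR_ext; intros k _. f_equal.
  unfold zcol. replace n with (S (n-1)) at 1 by lia. rewrite sumR_S. f_equal.
  - apply sumR_ext; intros i Hi. unfold q_of.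
    destruct (Nat.ltb_spec i (n-1)); [reflexivity|lia].
  - unfold q_of. destruct (Nat.ltb_spec (n-1) (n-1)); [lia|].
    rewrite norm2_pow2. reflexivity.
Qed.

Lemma qlast_pos m v : sqnorm m v < 1 -> 0 < qlast m v.
Proof. intros; apply sqrt_lt_R0; lra. Qed.

Lemma qlast_mul_qlast m v : sqnorm m v < 1 -> qlast m v * qlast m v = 1 - sqnorm m v.
Proof. intros; apply sqrt_sqrt; lra. Qed.

Lemma upd_same w i t : upd w i t i = t.
Proof. unfold upd. rewrite Nat.eqb_refl. reflexivity. Qed.

Lemma upd_id w i : upd w i (w i) = w.
Proof.
  apply functional_extensionality; intros j. unfold upd.
  destruct (Nat.eqb_spec j i); subst; reflexivity.
Qed.

Lemma sqnorm_upd m w i t : (i < m)%nat ->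
  sqnorm m (upd w i t) = sqnorm m w + (t * t - w i * w i).
Proof.
  intros Hi. rewrite <- (sumR_delta m i (t * t - w i * w i)) by exact Hi.
  unfold sqnorm. rewrite <- sumR_plus. apply sumR_ext; intros l _.
  unfold upd. destruct (Nat.eqb_spec l i); subst; ring.
Qed.

Lemma derivable_pt_lim_upd w i j t0 :
  derivable_pt_lim (fun t => upd w i t j) t0 (if Nat.eqb j i then 1 else 0).
Proof.
  unfold upd. destruct (Nat.eqb j i); [apply derivable_pt_lim_id|apply derivable_pt_lim_const].
Qed.

Lemma derivable_pt_lim_sqnorm_upd m w i t0 : (i < m)%nat ->
  derivable_pt_lim (fun t => sqnorm m (upd w i t)) t0 (2 * t0).
Proof.
  intros Hi. unfold sqnorm. rewrite <- (sumR_delta m i (2 * t0)) by exact Hi.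
  apply (derivable_pt_lim_sumR m (fun l t => upd w i t l * upd w i t l)). intros l Hl.
  replace (if Nat.eqb l i then 2 * t0 else 0) with
    ((if Nat.eqb l i then 1 else 0) * upd w i t0 l + upd w i t0 l * (if Nat.eqb l i then 1 else 0))
    by (unfold upd; destruct (Nat.eqb l i); ring).
  apply (derivable_pt_lim_mult (fun t => upd w i t l) (fun t => upd w i t l));
    apply derivable_pt_lim_upd.
Qed.

Lemma derivable_pt_lim_qlast_upd m w i t0 : (i < m)%nat -> sqnorm m (upd w i t0) < 1 ->
  derivable_pt_lim (fun t => qlast m (upd w i t)) t0 (- t0 / qlast m (upd w i t0)).
Proof.
  intros Hi HN. pose proof (qlast_pos _ _ HN).
  replace (- t0 / qlast m (upd w i t0))
    with (/ (2 * sqrt (1 - sqnorm m (upd w i t0))) * (0 - 2 * t0))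
    by (unfold qlast in *; field; lra).
  apply (derivable_pt_lim_comp (fun t => 1 - sqnorm m (upd w i t)) sqrt).
  - apply (derivable_pt_lim_minus (fun _ => 1) (fun t => sqnorm m (upd w i t))).
    + apply derivable_pt_lim_const.
    + apply derivable_pt_lim_sqnorm_upd; exact Hi.
  - apply derivable_pt_lim_sqrt. lra.
Qed.

Lemma derivable_pt_lim_zcol_upd n X k w i t0 : (i < n-1)%nat -> sqnorm (n-1) (upd w i t0) < 1 ->
  derivable_pt_lim (fun t => zcol n X k (upd w i t)) t0
    (X i k - t0 * X (n-1)%nat k / qlast (n-1) (upd w i t0)).
Proof.
  intros Hi HN. pose proof (qlast_pos _ _ HN). unfold zcol.
  replace (X i k - t0 * X (n-1)%nat k / qlast (n-1) (upd w i t0)) with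
    (sumR (n-1) (fun l => (if Nat.eqb l i then 1 else 0) * X l k)
     + (- t0 / qlast (n-1) (upd w i t0)) * X (n-1)%nat k).
  2:{ rewrite (sumR_ext _ _ (fun l => if Nat.eqb l i then X i k else 0)).
      - rewrite sumR_delta by exact Hi. field. lra.
      - intros l _. destruct (Nat.eqb_spec l i); subst; ring. }
  apply (derivable_pt_lim_plus (fun t => sumR (n-1) (fun l => upd w i t l * X l k))
           (fun t => qlast (n-1) (upd w i t) * X (n-1)%nat k)).
  - apply (derivable_pt_lim_sumR (n-1) (fun l t => upd w i t l * X l k)). intros l Hl.
    apply (derivable_pt_lim_scal_right (fun t => upd w i t l)). apply derivable_pt_lim_upd.
  - apply (derivable_pt_lim_scal_right (fun t => qlast (n-1) (upd w i t))).
    apply derivable_pt_lim_qlast_upd; assumption.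
Qed.

Definition grad_g (mu : R) (n p : nat) (X : nat -> nat -> R) (j : nat) (v : vec) : R :=
  / INR p * sumR p (fun k =>
    tanh (zcol n X k v / mu) * (X j k - v j * X (n-1)%nat k / qlast (n-1) v)).

Definition hess_term (mu : R) (n : nat) (X : nat -> nat -> R) (k i j : nat) (v : vec) : R :=
  (1 - tanh (zcol n X k v / mu) ^ 2) / mu
    * (X i k - v i * X (n-1)%nat k / qlast (n-1) v)
    * (X j k - v j * X (n-1)%nat k / qlast (n-1) v)
  - tanh (zcol n X k v / mu) * X (n-1)%nat k
    * ((if Nat.eqb j i then 1 else 0) / qlast (n-1) v + v i * v j / qlast (n-1) v ^ 3).

Definition hess_g (mu : R) (n p : nat) (X : nat -> nat -> R) (i j : nat) (v : vec) : R :=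
  / INR p * sumR p (fun k => hess_term mu n X k i j v).

Lemma derivable_pt_lim_g_chart_upd mu n p X w i t0 :
  0 < mu -> (i < n-1)%nat -> sqnorm (n-1) (upd w i t0) < 1 ->
  derivable_pt_lim (fun t => g_chart mu n p X (upd w i t)) t0 (grad_g mu n p X i (upd w i t0)).
Proof.
  intros Hmu Hi HN. unfold g_chart, grad_g.
  apply derivable_pt_lim_scal.
  apply (derivable_pt_lim_sumR p (fun k t => h_mu mu (zcol n X k (upd w i t)))). intros k Hk.
  rewrite upd_same.
  apply (derivable_pt_lim_comp (fun t => zcol n X k (upd w i t)) (h_mu mu)).
  - apply derivable_pt_lim_zcol_upd; assumption.
  - apply derivable_pt_lim_h_mu; assumption.
Qed.

Lemma partial_g_chart mu n p X j v : 0 < mu -> (j < n-1)%nat -> sqnorm (n-1) v < 1 ->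
  partial (g_chart mu n p X) j v = grad_g mu n p X j v.
Proof.
  intros Hmu Hj HN. unfold partial. apply deriv1_eq.
  pose proof (derivable_pt_lim_g_chart_upd mu n p X v j (v j) Hmu Hj) as H.
  rewrite upd_id in H. exact (H HN).
Qed.

Lemma derivable_pt_lim_grad_g_upd mu n p X w i j t0 :
  0 < mu -> (i < n-1)%nat -> sqnorm (n-1) (upd w i t0) < 1 ->
  derivable_pt_lim (fun t => grad_g mu n p X j (upd w i t)) t0 (hess_g mu n p X i j (upd w i t0)).
Proof.
  intros Hmu Hi HN. pose proof (qlast_pos _ _ HN) as Hs.
  unfold grad_g, hess_g. apply derivable_pt_lim_scal.
  apply derivable_pt_lim_sumR. intros k Hk.
  set (u := upd w i t0) in *. set (s := qlast (n-1) u) in *. set (xn := X (n-1)%nat k).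
  assert (Hdenom : derivable_pt_lim (fun t => upd w i t j * xn / qlast (n-1) (upd w i t)) t0
     (((if Nat.eqb j i then 1 else 0) * xn * s - (- t0 / s) * (u j * xn)) / s²)).
  { apply (derivable_pt_lim_div (fun t => upd w i t j * xn) (fun t => qlast (n-1) (upd w i t))).
    - apply (derivable_pt_lim_scal_right (fun t => upd w i t j)), derivable_pt_lim_upd.
    - apply derivable_pt_lim_qlast_upd; assumption.
    - change (s <> 0). lra. }
  assert (Hz := derivable_pt_lim_zcol_upd n X k w i t0 Hi HN). fold u s xn in Hz.
  replace (hess_term mu n X k i j u) with
    ((1 - tanh (zcol n X k u / mu) ^ 2) * ((X i k - t0 * xn / s) / mu)
       * (X j k - u j * xn / s)
     + tanh (zcol n X k u / mu)
       * (0 - ((if Nat.eqb j i then 1 else 0) * xn * s - (- t0 / s) * (u j * xn)) / s²)).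
  2:{ assert (Hui : u i = t0) by apply upd_same.
      unfold hess_term. fold s xn. rewrite Hui. unfold Rsqr. field. lra. }
  apply (derivable_pt_lim_mult (fun t => tanh (zcol n X k (upd w i t) / mu))
           (fun t => X j k - upd w i t j * xn / qlast (n-1) (upd w i t))).
  - apply (derivable_pt_lim_comp (fun t => zcol n X k (upd w i t) / mu) tanh).
    + apply derivable_pt_lim_div_scal. exact Hz.
    + apply derivable_pt_lim_tanh.
  - apply derivable_pt_lim_minus; [apply derivable_pt_lim_const|exact Hdenom].
Qed.

Lemma sqnorm_upd_lt_1_near m w i : (i < m)%nat -> sqnorm m w < 1 ->
  exists d, 0 < d /\ forall t, Rabs (t - w i) < d -> sqnorm m (upd w i t) < 1.
Proof.
  intros Hi HN. set (e := 1 - sqnorm m w). set (a := Rabs (w i)).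
  assert (He : 0 < e) by (unfold e; lra).
  assert (Ha : 0 <= a) by apply Rabs_pos.
  exists (Rmin 1 (e / (2 * a + 2))). split.
  { apply Rmin_pos; [lra|apply Rdiv_lt_0_compat; lra]. }
  intros t Ht. rewrite sqnorm_upd by exact Hi.
  set (d := Rmin 1 (e / (2 * a + 2))) in Ht.
  assert (Hd1 : d <= 1) by apply Rmin_l.
  assert (Hd2 : d * (2 * a + 2) <= e).
  { assert (d <= e / (2 * a + 2)) by apply Rmin_r.
    apply (Rmult_le_compat_r (2 * a + 2)) in H; [|lra].
    unfold Rdiv in H. rewrite Rmult_assoc, Rinv_l, Rmult_1_r in H; lra. }
  assert (Hta : Rabs (t + w i) <= 2 * a + 1).
  { replace (t + w i) with ((t - w i) + 2 * w i) by ring.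
    eapply Rle_trans; [apply Rabs_triang|].
    rewrite Rabs_mult, (Rabs_right 2) by lra. unfold a. lra. }
  assert (Rabs (t * t - w i * w i) < e).
  { replace (t * t - w i * w i) with ((t - w i) * (t + w i)) by ring.
    rewrite Rabs_mult. pose proof (Rabs_pos (t + w i)). pose proof (Rabs_pos (t - w i)).
    apply Rle_lt_trans with (d * (2 * a + 1)); [|nra].
    apply Rmult_le_compat; lra. }
  pose proof (Rle_abs (t * t - w i * w i)). unfold e in *. lra.
Qed.

Lemma hessian_g_chart mu n p X w i j :
  0 < mu -> (i < n-1)%nat -> (j < n-1)%nat -> sqnorm (n-1) w < 1 ->
  hessian (g_chart mu n p X) w i j = hess_g mu n p X i j w.
Proof.
  intros Hmu Hi Hj HN. unfold hessian, partial at 1. apply deriv1_eq.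
  destruct (sqnorm_upd_lt_1_near (n-1) w i Hi HN) as [d [Hd Hnear]].
  apply (derivable_pt_lim_local _ (fun t => grad_g mu n p X j (upd w i t)) _ _ d Hd).
  - intros t Ht. apply partial_g_chart; auto.
  - pose proof (derivable_pt_lim_grad_g_upd mu n p X w i j (w i) Hmu Hi) as H.
    rewrite upd_id in H. exact (H HN).
Qed.

(** * The Rayleigh quotient of the Hessian *)

Definition radial_slope (n : nat) (X : nat -> nat -> R) (k : nat) (w : vec) : R :=
  sumR (n-1) (fun i => w i * X i k) / norm2 (n-1) w
  - norm2 (n-1) w * X (n-1)%nat k / qlast (n-1) w.

Definition rayleigh_term (mu : R) (n : nat) (X : nat -> nat -> R) (k : nat) (w : vec) : R :=
  (1 - tanh (zcol n X k w / mu) ^ 2) / mu * radial_slope n X k w ^ 2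
  - tanh (zcol n X k w / mu) * X (n-1)%nat k / qlast (n-1) w ^ 3.

Definition rayleigh (mu : R) (n p : nat) (X : nat -> nat -> R) (w : vec) : R :=
  / INR p * sumR p (fun k => rayleigh_term mu n X k w).

Lemma sumR_quad_form m w P a b c e :
  sumR m (fun i => sumR m (fun j =>
    w i * (a * P i * P j - c * ((if Nat.eqb j i then 1 else 0) * b + w i * w j * e)) * w j))
  = a * dot m w P ^ 2 - c * (b * sqnorm m w + e * sqnorm m w ^ 2).
Proof.
  rewrite (sumR_ext m _ (fun i =>
    (a * dot m w P) * (w i * P i) + (- (c * b) - c * e * sqnorm m w) * (w i * w i))).
  - rewrite sumR_plus, !sumR_scal. unfold dot, sqnorm. ring.
  - intros i Hi.
    rewrite (sumR_ext m _ (fun j => (a * (w i * P i)) * (w j * P j)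
       + (- (c * b)) * (if Nat.eqb j i then w i * w i else 0)
       + (- (c * e * (w i * w i))) * (w j * w j))).
    + rewrite !sumR_plus, !sumR_scal, sumR_delta by exact Hi. unfold dot, sqnorm. ring.
    + intros j _. destruct (Nat.eqb_spec j i); [subst|]; ring.
Qed.

(* Summed against w on both sides, the rank-one part of the Hessian term produces
   (|w| c_k)^2 and the remaining part |w|^2/s + |w|^4/s^3 = |w|^2/s^3, as s^2 + |w|^2 = 1. *)
Lemma quad_hess_term mu n X k w : 0 < sqnorm (n-1) w < 1 ->
  sumR (n-1) (fun i => sumR (n-1) (fun j => w i * hess_term mu n X k i j w * w j))
  = sqnorm (n-1) w * rayleigh_term mu n X k w.
Proof.
  intros [HN0 HN1]. set (m := (n-1)%nat) in *.
  set (s := qlast m w). set (xn := X m k). set (t := tanh (zcol n X k w / mu)).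
  set (P := fun i => X i k - w i * xn / s).
  pose proof (qlast_pos _ _ HN1) as Hs. pose proof (qlast_mul_qlast _ _ HN1) as Hs2. fold s in Hs, Hs2.
  rewrite (sumR_ext m _ (fun i => sumR m (fun j => w i * ((1 - t ^ 2) / mu * P i * P j
     - t * xn * ((if Nat.eqb j i then 1 else 0) * / s + w i * w j * / s ^ 3)) * w j))).
  2:{ intros i _. apply sumR_ext; intros j _. reflexivity. }
  rewrite sumR_quad_form.
  assert (Hrho : norm2 m w * norm2 m w = sqnorm m w) by apply norm2_mul_norm2.
  assert (Hrho0 : 0 < norm2 m w) by (apply sqrt_lt_R0; exact HN0).
  assert (HwP : dot m w P = norm2 m w * radial_slope n X k w).
  { unfold dot, P, radial_slope. fold m s xn.
    rewrite (sumR_ext m _ (fun i => w i * X i k - (w i * w i) * (xn / s))) by (intros; field; lra).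
    rewrite sumR_minus, sumR_scalr. fold (sqnorm m w). rewrite <- Hrho. field. lra. }
  rewrite HwP. unfold rayleigh_term. fold m s xn t. rewrite <- Hrho in *.
  set (rho := norm2 m w) in *. set (c := radial_slope n X k w).
  assert (E : / s * (rho * rho) + / s ^ 3 * (rho * rho) ^ 2 = (rho * rho) * (s * s + rho * rho) / s ^ 3)
    by (field; lra).
  rewrite E, Hs2. unfold Rdiv. ring.
Qed.

Lemma hess_quad_g_obj mu n p X w : 0 < mu -> (1 <= n)%nat -> 0 < sqnorm (n-1) w < 1 ->
  hess_quad (n-1) (g_obj mu n p X) w / norm2 (n-1) w ^ 2 = rayleigh mu n p X w.
Proof.
  intros Hmu Hn HN. rewrite g_obj_chart by exact Hn. unfold hess_quad, rayleigh.
  rewrite (sumR_ext (n-1) _ (fun i => / INR p * sumR p (fun k =>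
     sumR (n-1) (fun j => w i * hess_term mu n X k i j w * w j)))).
  2:{ intros i Hi. rewrite sumR_swap, <- sumR_scal. apply sumR_ext; intros j Hj.
      rewrite hessian_g_chart by (auto; lra). unfold hess_g.
      rewrite (sumR_ext p (fun k => w i * hess_term mu n X k i j w * w j)
                 (fun k => (w i * w j) * hess_term mu n X k i j w))
        by (intros; ring).
      rewrite sumR_scal. ring. }
  rewrite sumR_scal, sumR_swap.
  rewrite (sumR_ext p _ (fun k => sqnorm (n-1) w * rayleigh_term mu n X k w))
    by (intros; apply quad_hess_term; exact HN).
  rewrite sumR_scal, norm2_pow2. unfold Rdiv.
  rewrite (Rmult_comm (sqnorm (n-1) w)), Rmult_assoc, Rmult_assoc, Rinv_r by (destruct HN; lra).
  ring.
Qed.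

(** * Lipschitz estimates *)

Lemma Rabs_mult_le x y A B : Rabs x <= A -> Rabs y <= B -> Rabs (x * y) <= A * B.
Proof. intros. rewrite Rabs_mult. apply Rmult_le_compat; auto using Rabs_pos. Qed.

Lemma Rinv_lt_of_mult_gt a s : 0 < s -> 1 < a * s -> / s < a.
Proof. intros Hs H. apply (Rmult_lt_reg_r s); [exact Hs|]. rewrite Rinv_l; lra. Qed.

Section UnitCircle.

Variables a r1 r2 s1 s2 : R.
Hypotheses (Hs1 : 0 < s1) (Hs2 : 0 < s2) (Ha1 : 1 < a * s1) (Ha2 : 1 < a * s2).
Hypotheses (Hc1 : s1 * s1 + r1 * r1 = 1) (Hc2 : s2 * s2 + r2 * r2 = 1).

(* |s1 - s2| (s1 + s2) = |r1 - r2| (r1 + r2), and r1 + r2 < 2 < a (s1 + s2). *)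
Lemma circle_height_sub_le : 0 <= r1 -> 0 <= r2 -> Rabs (s1 - s2) <= a * Rabs (r1 - r2).
Proof.
  intros Hr1 Hr2.
  assert (E : Rabs (s1 - s2) * (s1 + s2) = Rabs (r1 - r2) * (r1 + r2)).
  { rewrite <- (Rabs_right (s1 + s2)), <- (Rabs_right (r1 + r2)), <- !Rabs_mult by lra.
    rewrite <- Rabs_Ropp. f_equal. nra. }
  pose proof (Rabs_pos (r1 - r2)).
  apply (Rmult_le_reg_r (s1 + s2)); [lra|]. rewrite E.
  replace (a * Rabs (r1 - r2) * (s1 + s2)) with (Rabs (r1 - r2) * (a * (s1 + s2))) by ring.
  assert (r1 < 1) by nra. assert (r2 < 1) by nra.
  apply Rmult_le_compat_l; lra.
Qed.

Lemma circle_slope_sub_le : 0 < r1 -> 0 < r2 ->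
  Rabs (r1 / s1 - r2 / s2) <= a ^ 3 * Rabs (r1 - r2).
Proof.
  intros Hr1 Hr2. set (q := r1 * s2 - r2 * s1). set (d := Rabs (r1 - r2)).
  assert (Hw : 0 < r1 * s2 + r2 * s1) by nra.
  assert (E : Rabs q * (r1 * s2 + r2 * s1) = d * (r1 + r2)).
  { unfold d. rewrite <- (Rabs_right (r1 * s2 + r2 * s1)), <- (Rabs_right (r1 + r2)), <- !Rabs_mult
      by lra. f_equal. unfold q. nra. }
  assert (Hd : 0 <= d) by apply Rabs_pos.
  assert (Hq : Rabs q <= a * d).
  { apply (Rmult_le_reg_r (r1 * s2 + r2 * s1)); [exact Hw|]. rewrite E.
    assert (r1 + r2 <= a * (r1 * s2 + r2 * s1)) by nra.
    replace (a * d * (r1 * s2 + r2 * s1)) with (d * (a * (r1 * s2 + r2 * s1))) by ring.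
    apply Rmult_le_compat_l; lra. }
  replace (r1 / s1 - r2 / s2) with (q * (/ s1 * / s2)) by (unfold q; field; lra).
  assert (H1 : 0 < / s1 < a) by (split; [apply Rinv_0_lt_compat|apply Rinv_lt_of_mult_gt]; lra).
  assert (H2 : 0 < / s2 < a) by (split; [apply Rinv_0_lt_compat|apply Rinv_lt_of_mult_gt]; lra).
  replace (a ^ 3 * d) with ((a * d) * (a * a)) by ring.
  apply Rabs_mult_le; [exact Hq|]. rewrite Rabs_right by nra. nra.
Qed.

End UnitCircle.

Lemma telescope_abs_le t1 t2 c1 c2 x i1 i2 m :
  Rabs ((1 - t1 ^ 2) * m * c1 ^ 2 - t1 * x * i1 - ((1 - t2 ^ 2) * m * c2 ^ 2 - t2 * x * i2))
  <= Rabs ((t2 ^ 2 - t1 ^ 2) * m * c1 ^ 2) + Rabs ((1 - t2 ^ 2) * m * (c1 ^ 2 - c2 ^ 2))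
     + Rabs ((t1 - t2) * x * i1) + Rabs (t2 * x * (i1 - i2)).
Proof.
  replace ((1 - t1 ^ 2) * m * c1 ^ 2 - t1 * x * i1 - ((1 - t2 ^ 2) * m * c2 ^ 2 - t2 * x * i2))
    with ((t2 ^ 2 - t1 ^ 2) * m * c1 ^ 2 + (1 - t2 ^ 2) * m * (c1 ^ 2 - c2 ^ 2)
          + (- ((t1 - t2) * x * i1)) + (- (t2 * x * (i1 - i2)))) by ring.
  rewrite <- (Rabs_Ropp ((t1 - t2) * x * i1)), <- (Rabs_Ropp (t2 * x * (i1 - i2))).
  repeat (eapply Rle_trans; [apply Rabs_triang|apply Rplus_le_compat_r]). lra.
Qed.

Lemma inv_cube_sub_le a s1 s2 : 0 < s1 -> 0 < s2 -> 1 < a * s1 -> 1 < a * s2 ->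
  Rabs (/ s1 ^ 3 - / s2 ^ 3) <= 3 * a ^ 4 * Rabs (s1 - s2).
Proof.
  intros Hs1 Hs2 Ha1 Ha2. set (i1 := / s1). set (i2 := / s2).
  assert (0 < i1 < a) by (split; [apply Rinv_0_lt_compat|apply Rinv_lt_of_mult_gt]; lra).
  assert (0 < i2 < a) by (split; [apply Rinv_0_lt_compat|apply Rinv_lt_of_mult_gt]; lra).
  replace (/ s1 ^ 3 - / s2 ^ 3) with ((i1 * i2 * (i1 * i1 + i1 * i2 + i2 * i2)) * (s2 - s1))
    by (unfold i1, i2; field; lra).
  rewrite (Rabs_minus_sym s1 s2). apply Rabs_mult_le; [|lra].
  assert (i1 * i2 <= a * a) by nra.
  assert (i1 * i1 + i1 * i2 + i2 * i2 <= 3 * (a * a)) by nra.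
  rewrite Rabs_right by (apply Rle_ge; repeat apply Rmult_le_pos; nra).
  replace (3 * a ^ 4) with ((a * a) * (3 * (a * a))) by ring.
  apply Rmult_le_compat; nra.
Qed.

Lemma sqnorm_lt_on_Gamma n w : (1 <= n)%nat -> in_Gamma n w ->
  sqnorm (n-1) w < 1 - / (4 * INR n).
Proof.
  intros Hn HG. unfold in_Gamma in HG.
  assert (Hn1 : 1 <= INR n) by (apply (le_INR 1); exact Hn).
  assert (Hq : 0 <= (4 * INR n - 1) / (4 * INR n))
    by (apply Rmult_le_pos; [lra|left; apply Rinv_0_lt_compat; lra]).
  rewrite <- norm2_mul_norm2.
  replace (1 - / (4 * INR n)) with ((4 * INR n - 1) / (4 * INR n)) by (field; lra).
  rewrite <- (sqrt_sqrt _ Hq). pose proof (norm2_nonneg (n-1) w).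
  apply Rmult_le_0_lt_compat; assumption.
Qed.

Lemma qlast_gt_on_Gamma n w : (1 <= n)%nat -> in_Gamma n w ->
  1 < 2 * sqrt (INR n) * qlast (n-1) w.
Proof.
  intros Hn HG. pose proof (sqnorm_lt_on_Gamma n w Hn HG) as HN.
  assert (Hn1 : 1 <= INR n) by (apply (le_INR 1); exact Hn).
  assert (HN1 : sqnorm (n-1) w < 1) by (pose proof (Rinv_0_lt_compat (4 * INR n)); lra).
  pose proof (qlast_pos _ _ HN1) as Hs. pose proof (qlast_mul_qlast _ _ HN1) as Hs2.
  set (s := qlast (n-1) w) in *. set (t := sqrt (INR n)).
  assert (Ht : t * t = INR n) by (apply sqrt_sqrt; lra).
  assert (Htp : 0 < t) by (apply sqrt_lt_R0; lra).
  assert (Hss : 1 < s * s * (4 * INR n)).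
  { assert (/ (4 * INR n) * (4 * INR n) = 1) by (field; lra).
    assert (/ (4 * INR n) < s * s) by lra. nra. }
  rewrite <- Ht in Hss.
  assert (H2 : 1 < (2 * t * s) * (2 * t * s)) by lra.
  assert (0 < 2 * t * s) by nra.
  destruct (Rle_lt_dec (2 * t * s) 1); [nra|assumption].
Qed.

(* Z M with Z = sqrt(n-1) + a bounds |c_k| and the Lipschitz constant of z_k, and
   sqrt(n-1) M / r + a^3 M is the Lipschitz constant of c_k. *)
Definition rayleigh_lipschitz_const (n : nat) (mu r a M : R) : R :=
  (sqrt (INR (n-1)) + a) ^ 3 * M ^ 3 / mu ^ 2
  + 2 * (sqrt (INR (n-1)) + a) * M * (sqrt (INR (n-1)) * M / r + a ^ 3 * M) / mu
  + (sqrt (INR (n-1)) + a) * M ^ 2 * a ^ 3 / mu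
  + 3 * a ^ 5 * M.

Section ColumnEstimates.

Variables (n p : nat) (X : nat -> nat -> R) (k : nat) (a : R).
Hypotheses (Hn : (1 <= n)%nat) (Hk : (k < p)%nat).

Lemma xlast_abs_le : Rabs (X (n-1)%nat k) <= max_abs n p X.
Proof. apply max_abs_ge; lia. Qed.

Lemma radial_slope_abs_le w : 0 < sqnorm (n-1) w < 1 -> 1 < a * qlast (n-1) w ->
  Rabs (radial_slope n X k w) <= (sqrt (INR (n-1)) + a) * max_abs n p X.
Proof.
  intros [HN0 HN1] Ha. unfold radial_slope.
  pose proof (qlast_pos _ _ HN1) as Hs.
  assert (Hrho : 0 < norm2 (n-1) w) by (apply sqrt_lt_R0; exact HN0).
  assert (Hrho1 : norm2 (n-1) w < 1).
  { rewrite <- sqrt_1. apply sqrt_lt_1_alt. split; [apply sqnorm_nonneg|exact HN1]. }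
  set (rho := norm2 (n-1) w) in *. set (s := qlast (n-1) w) in *. set (M := max_abs n p X).
  pose proof (dot_col_le n p X k w Hk) as HD. fold rho M in HD.
  assert (A1 : Rabs (sumR (n - 1) (fun i => w i * X i k) / rho) <= sqrt (INR (n-1)) * M).
  { unfold Rdiv. rewrite Rabs_mult, (Rabs_right (/ rho)) by (left; apply Rinv_0_lt_compat; lra).
    apply (Rmult_le_reg_r rho); [exact Hrho|]. rewrite Rmult_assoc, Rinv_l by lra. lra. }
  assert (A2 : Rabs (rho * X (n - 1)%nat k / s) <= M * a).
  { replace (rho * X (n - 1)%nat k / s) with (X (n-1)%nat k * (rho * / s)) by (unfold Rdiv; ring).
    apply Rabs_mult_le; [apply xlast_abs_le|].
    pose proof (Rinv_lt_of_mult_gt a s Hs Ha). pose proof (Rinv_0_lt_compat s Hs).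
    rewrite Rabs_right by (apply Rle_ge, Rmult_le_pos; lra). nra. }
  unfold Rminus. eapply Rle_trans; [apply Rabs_triang|]. rewrite Rabs_Ropp. lra.
Qed.

Section TwoPoints.

Variables (r : R) (w1 w2 : vec).
Hypotheses (Hr : 0 < r) (Hr1 : r <= norm2 (n-1) w1) (Hr2 : r <= norm2 (n-1) w2).
Hypotheses (HN1 : sqnorm (n-1) w1 < 1) (HN2 : sqnorm (n-1) w2 < 1).
Hypotheses (Ha1 : 1 < a * qlast (n-1) w1) (Ha2 : 1 < a * qlast (n-1) w2).

Let d := norm2 (n-1) (fun i => w1 i - w2 i).

Lemma qlast_sub_le : Rabs (qlast (n-1) w1 - qlast (n-1) w2) <= a * d.
Proof.
  eapply Rle_trans.
  - apply (circle_height_sub_le a (norm2 (n-1) w1) (norm2 (n-1) w2));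
      auto using qlast_pos, norm2_nonneg;
      rewrite qlast_mul_qlast, norm2_mul_norm2 by assumption; ring.
  - apply Rmult_le_compat_l; [|apply norm2_sub_reverse].
    pose proof (qlast_pos _ _ HN1). nra.
Qed.

Lemma zcol_sub_le :
  Rabs (zcol n X k w1 - zcol n X k w2) <= (sqrt (INR (n-1)) + a) * max_abs n p X * d.
Proof.
  assert (E : zcol n X k w1 - zcol n X k w2 = sumR (n-1) (fun i => (w1 i - w2 i) * X i k)
              + (qlast (n-1) w1 - qlast (n-1) w2) * X (n-1)%nat k).
  { unfold zcol. rewrite (sumR_ext (n-1) (fun i => (w1 i - w2 i) * X i k)
      (fun i => w1 i * X i k - w2 i * X i k)) by (intros; ring). rewrite sumR_minus. ring. }
  rewrite E. eapply Rle_trans; [apply Rabs_triang|].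
  pose proof (dot_col_le n p X k (fun i => w1 i - w2 i) Hk) as HD. fold d in HD.
  pose proof (Rabs_mult_le _ _ _ _ qlast_sub_le xlast_abs_le). lra.
Qed.

Lemma radial_slope_sub_le :
  Rabs (radial_slope n X k w1 - radial_slope n X k w2)
  <= (sqrt (INR (n-1)) * max_abs n p X / r + a ^ 3 * max_abs n p X) * d.
Proof.
  unfold radial_slope.
  set (rho1 := norm2 (n-1) w1) in *. set (rho2 := norm2 (n-1) w2) in *.
  set (s1 := qlast (n-1) w1) in *. set (s2 := qlast (n-1) w2) in *.
  set (M := max_abs n p X). set (xn := X (n-1)%nat k).
  pose proof (qlast_pos _ _ HN1) as Hs1. pose proof (qlast_pos _ _ HN2) as Hs2.
  fold s1 s2 in Hs1, Hs2.
  assert (Hc1 : s1 * s1 + rho1 * rho1 = 1)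
    by (unfold s1, rho1; rewrite qlast_mul_qlast, norm2_mul_norm2 by assumption; ring).
  assert (Hc2 : s2 * s2 + rho2 * rho2 = 1)
    by (unfold s2, rho2; rewrite qlast_mul_qlast, norm2_mul_norm2 by assumption; ring).
  assert (Hd : 0 <= d) by apply norm2_nonneg.
  assert (E : sumR (n - 1) (fun i => w1 i * X i k) / rho1 - rho1 * xn / s1
              - (sumR (n - 1) (fun i => w2 i * X i k) / rho2 - rho2 * xn / s2)
            = sumR (n-1) (fun i => (w1 i / rho1 - w2 i / rho2) * X i k)
              - xn * (rho1 / s1 - rho2 / s2)).
  { rewrite (sumR_ext (n-1) (fun i => (w1 i / rho1 - w2 i / rho2) * X i k)
        (fun i => / rho1 * (w1 i * X i k) - / rho2 * (w2 i * X i k))) by (intros; field; lra).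
    rewrite sumR_minus, !sumR_scal. field. lra. }
  rewrite E. unfold Rminus at 1. eapply Rle_trans; [apply Rabs_triang|]. rewrite Rabs_Ropp.
  assert (A1 : Rabs (sumR (n-1) (fun i => (w1 i / rho1 - w2 i / rho2) * X i k))
               <= d / r * (sqrt (INR (n-1)) * M)).
  { eapply Rle_trans; [apply (dot_col_le n p X k _ Hk)|].
    apply Rmult_le_compat_r; [apply Rmult_le_pos; [apply sqrt_pos|apply max_abs_nonneg]|].
    apply norm2_normalize_sub; assumption. }
  assert (A2 : Rabs (xn * (rho1 / s1 - rho2 / s2)) <= M * (a ^ 3 * d)).
  { apply Rabs_mult_le; [apply xlast_abs_le|].
    eapply Rle_trans.
    - apply (circle_slope_sub_le a); (assumption || lra).
    - apply Rmult_le_compat_l; [apply pow_le; nra|].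
      apply norm2_sub_reverse. }
  replace ((sqrt (INR (n - 1)) * M / r + a ^ 3 * M) * d)
    with (d / r * (sqrt (INR (n-1)) * M) + M * (a ^ 3 * d)) by (field; lra).
  lra.
Qed.

Lemma zcol_div_sub_le mu : 0 < mu ->
  Rabs (zcol n X k w1 / mu - zcol n X k w2 / mu)
  <= (sqrt (INR (n-1)) + a) * max_abs n p X * d / mu.
Proof.
  intros Hmu. replace (zcol n X k w1 / mu - zcol n X k w2 / mu)
    with ((zcol n X k w1 - zcol n X k w2) * / mu) by (field; lra).
  rewrite Rabs_mult, (Rabs_right (/ mu)) by (apply Rle_ge; left; apply Rinv_0_lt_compat; exact Hmu).
  apply Rmult_le_compat_r; [left; apply Rinv_0_lt_compat; exact Hmu|apply zcol_sub_le].
Qed.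

Lemma inv_qlast_cube_le : 0 <= / qlast (n-1) w1 ^ 3 <= a ^ 3.
Proof.
  pose proof (qlast_pos _ _ HN1) as Hs1.
  pose proof (Rinv_lt_of_mult_gt a _ Hs1 Ha1). pose proof (Rinv_0_lt_compat _ Hs1).
  rewrite <- pow_inv. split; [apply pow_le; lra|apply pow_incr; lra].
Qed.

Lemma rayleigh_term_sub_le mu : 0 < mu ->
  Rabs (rayleigh_term mu n X k w1 - rayleigh_term mu n X k w2)
  <= rayleigh_lipschitz_const n mu r a (max_abs n p X) * d.
Proof.
  intros Hmu. unfold rayleigh_term, rayleigh_lipschitz_const.
  assert (HN1' : 0 < sqnorm (n-1) w1 < 1)
    by (split; [rewrite <- norm2_mul_norm2; nra|exact HN1]).
  assert (HN2' : 0 < sqnorm (n-1) w2 < 1)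
    by (split; [rewrite <- norm2_mul_norm2; nra|exact HN2]).
  pose proof (radial_slope_abs_le _ HN1' Ha1) as Hc1.
  pose proof (radial_slope_abs_le _ HN2' Ha2) as Hc2.
  pose proof radial_slope_sub_le as Hcd. pose proof xlast_abs_le as Hx.
  pose proof (zcol_div_sub_le mu Hmu) as Hz. pose proof inv_qlast_cube_le as Hi3.
  pose proof (qlast_pos _ _ HN1) as Hs1. pose proof (qlast_pos _ _ HN2) as Hs2.
  assert (Hi3d : Rabs (/ qlast (n-1) w1 ^ 3 - / qlast (n-1) w2 ^ 3) <= 3 * a ^ 4 * (a * d)).
  { eapply Rle_trans; [apply (inv_cube_sub_le a); assumption|].
    apply Rmult_le_compat_l; [|exact qlast_sub_le].
    assert (Ha0 : 0 <= a) by nra. pose proof (pow_le a 4 Ha0). lra. }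
  set (Z := sqrt (INR (n-1)) + a) in *. set (M := max_abs n p X) in *.
  set (K := sqrt (INR (n-1)) * M / r + a ^ 3 * M) in *.
  set (c1 := radial_slope n X k w1) in *. set (c2 := radial_slope n X k w2) in *.
  set (s1 := qlast (n-1) w1) in *. set (s2 := qlast (n-1) w2) in *.
  set (xn := X (n-1)%nat k) in *.
  pose proof (Rle_trans _ _ _ (tanh_sq_lipschitz _ _) Hz) as Et2.
  pose proof (Rle_trans _ _ _ (tanh_lipschitz _ _) Hz) as Et.
  set (t1 := tanh (zcol n X k w1 / mu)) in *. set (t2 := tanh (zcol n X k w2 / mu)) in *.
  pose proof (tanh_bound (zcol n X k w1 / mu)) as Ht1.
  pose proof (tanh_bound (zcol n X k w2 / mu)) as Ht2. fold t1 t2 in Ht1, Ht2.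
  assert (Hd : 0 <= d) by apply norm2_nonneg.
  assert (Hmu' : Rabs (/ mu) <= / mu)
    by (rewrite Rabs_right; [lra|apply Rle_ge; left; apply Rinv_0_lt_compat; exact Hmu]).
  assert (A1 : Rabs ((t2 ^ 2 - t1 ^ 2) * / mu * c1 ^ 2)
               <= Z * M * d / mu * / mu * (Z * M * (Z * M))).
  { rewrite Rabs_minus_sym in Et2. replace (c1 ^ 2) with (c1 * c1) by ring.
    repeat apply Rabs_mult_le; assumption. }
  assert (A2 : Rabs ((1 - t2 ^ 2) * / mu * (c1 ^ 2 - c2 ^ 2))
               <= 1 * / mu * (K * d * (2 * (Z * M)))).
  { replace (c1 ^ 2 - c2 ^ 2) with ((c1 - c2) * (c1 + c2)) by ring.
    repeat apply Rabs_mult_le; try assumption.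
    - apply Rabs_le; nra.
    - eapply Rle_trans; [apply Rabs_triang|lra]. }
  assert (A3 : Rabs ((t1 - t2) * xn * / s1 ^ 3) <= Z * M * d / mu * M * a ^ 3).
  { repeat apply Rabs_mult_le; try assumption. rewrite Rabs_right; lra. }
  assert (A4 : Rabs (t2 * xn * (/ s1 ^ 3 - / s2 ^ 3)) <= 1 * M * (3 * a ^ 4 * (a * d))).
  { repeat apply Rabs_mult_le; try assumption. apply Rabs_le; lra. }
  eapply Rle_trans; [apply telescope_abs_le|].
  apply Rle_trans with (Z * M * d / mu * / mu * (Z * M * (Z * M))
    + 1 * / mu * (K * d * (2 * (Z * M))) + Z * M * d / mu * M * a ^ 3
    + 1 * M * (3 * a ^ 4 * (a * d))); [lra|].
  right. field. lra.
Qed.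

End TwoPoints.
End ColumnEstimates.

Lemma rayleigh_lipschitz_const_nonneg n mu r a M : 0 < mu -> 0 < r -> 0 <= a -> 0 <= M ->
  0 <= rayleigh_lipschitz_const n mu r a M.
Proof.
  intros Hmu Hr Ha HM. pose proof (sqrt_pos (INR (n-1))).
  assert (0 < / mu) by (apply Rinv_0_lt_compat; exact Hmu).
  assert (0 < / r) by (apply Rinv_0_lt_compat; exact Hr).
  assert (0 < / mu ^ 2) by (apply Rinv_0_lt_compat, pow_lt; exact Hmu).
  unfold rayleigh_lipschitz_const, Rdiv.
  repeat (apply Rplus_le_le_0_compat || apply Rmult_le_pos || apply pow_le); lra.
Qed.

Lemma sqrt_pred_add_le n : (2 <= n)%nat ->
  sqrt (INR (n-1)) + 2 * sqrt (INR n) <= 2 * INR n.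
Proof.
  intros Hn. set (t := sqrt (INR n)).
  assert (Hn2 : 2 <= INR n) by (apply (le_INR 2); exact Hn).
  assert (Ht : t * t = INR n) by (apply sqrt_sqrt; lra).
  assert (Htp : 0 < t) by (apply sqrt_lt_R0; lra).
  assert (Hsm : sqrt (INR (n-1)) <= t) by (apply sqrt_le_1_alt, le_INR; lia).
  destruct (Nat.eq_dec n 2) as [->|Hne].
  - simpl. rewrite sqrt_1. simpl in Ht. nra.
  - assert (3 <= INR n) by (replace 3 with (INR 3) by (simpl; lra); apply le_INR; lia). nra.
Qed.

Lemma rayleigh_lipschitz_const_le n mu r M : (2 <= n)%nat -> 0 < mu -> 0 < r -> 0 <= M ->
  rayleigh_lipschitz_const n mu r (2 * sqrt (INR n)) M
  <= 16 * INR n ^ 3 / mu ^ 2 * M ^ 3 + 8 * sqrt (INR n) ^ 3 / (mu * r) * M ^ 2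
     + 48 * sqrt (INR n) ^ 5 / mu * M ^ 2 + 96 * sqrt (INR n) ^ 5 * M.
Proof.
  intros Hn Hmu Hr HM. pose proof (sqrt_pred_add_le n Hn) as HZ.
  unfold rayleigh_lipschitz_const.
  set (t := sqrt (INR n)) in *. set (sm := sqrt (INR (n-1))) in *.
  assert (Hn2 : 2 <= INR n) by (apply (le_INR 2); exact Hn).
  assert (Ht : t * t = INR n) by (apply sqrt_sqrt; lra).
  assert (Htp : 0 < t) by (apply sqrt_lt_R0; lra).
  assert (Hsm : 0 <= sm <= t) by (split; [apply sqrt_pos|apply sqrt_le_1_alt, le_INR; lia]).
  rewrite <- Ht in *. set (Z := sm + 2 * t) in *.
  assert (HZ0 : 0 <= Z) by (unfold Z; lra).
  assert (F1 : 0 <= M ^ 3 / mu ^ 2)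
    by (apply Rmult_le_pos; [apply pow_le; lra|left; apply Rinv_0_lt_compat, pow_lt; lra]).
  assert (F2 : 0 <= M ^ 2 / (mu * r))
    by (apply Rmult_le_pos; [apply pow_le; lra|left; apply Rinv_0_lt_compat; nra]).
  assert (F3 : 0 <= M ^ 2 / mu)
    by (apply Rmult_le_pos; [apply pow_le; lra|left; apply Rinv_0_lt_compat; lra]).
  assert (C1 : Z ^ 3 <= 16 * (t * t) ^ 3).
  { apply Rle_trans with ((2 * (t * t)) ^ 3); [apply pow_incr; lra|].
    assert (0 <= (t * t) ^ 3) by (apply pow_le; nra).
    replace ((2 * (t * t)) ^ 3) with (8 * (t * t) ^ 3) by ring. lra. }
  assert (C2 : 2 * Z * sm <= 8 * t ^ 3).
  { assert (Z * sm <= 2 * (t * t) * t) by (apply Rmult_le_compat; lra). simpl. nra. }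
  assert (C3 : 3 * Z * (2 * t) ^ 3 <= 48 * t ^ 5).
  { assert (0 <= t ^ 3) by (apply pow_le; lra).
    replace (3 * Z * (2 * t) ^ 3) with (24 * t ^ 3 * Z) by ring.
    replace (48 * t ^ 5) with (24 * t ^ 3 * (2 * (t * t))) by ring.
    apply Rmult_le_compat_l; lra. }
  replace (Z ^ 3 * M ^ 3 / mu ^ 2 + 2 * Z * M * (sm * M / r + (2 * t) ^ 3 * M) / mu
           + Z * M ^ 2 * (2 * t) ^ 3 / mu + 3 * (2 * t) ^ 5 * M)
    with (Z ^ 3 * (M ^ 3 / mu ^ 2) + (2 * Z * sm) * (M ^ 2 / (mu * r))
          + (3 * Z * (2 * t) ^ 3) * (M ^ 2 / mu) + (96 * t ^ 5) * M) by (field; lra).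
  replace (16 * (t * t) ^ 3 / mu ^ 2 * M ^ 3 + 8 * t ^ 3 / (mu * r) * M ^ 2
           + 48 * t ^ 5 / mu * M ^ 2 + 96 * t ^ 5 * M)
    with (16 * (t * t) ^ 3 * (M ^ 3 / mu ^ 2) + 8 * t ^ 3 * (M ^ 2 / (mu * r))
          + 48 * t ^ 5 * (M ^ 2 / mu) + 96 * t ^ 5 * M) by (field; lra).
  apply Rplus_le_compat_r.
  repeat apply Rplus_le_compat; apply Rmult_le_compat_r; assumption.
Qed.

Theorem mainTheorem11 (n p : nat) (mu r : R) (X0 : nat -> nat -> R) :
  0 < mu -> 0 < r < 1 ->
  forall w1 w2 : vec,
    in_Gamma n w1 -> r <= norm2 (n - 1) w1 ->
    in_Gamma n w2 -> r <= norm2 (n - 1) w2 ->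
    Rabs (hess_quad (n - 1) (g_obj mu n p X0) w1 / norm2 (n - 1) w1 ^ 2
          - hess_quad (n - 1) (g_obj mu n p X0) w2 / norm2 (n - 1) w2 ^ 2)
    <= (16 * INR n ^ 3 / mu ^ 2 * max_abs n p X0 ^ 3
        + 8 * sqrt (INR n) ^ 3 / (mu * r) * max_abs n p X0 ^ 2
        + 48 * sqrt (INR n) ^ 5 / mu * max_abs n p X0 ^ 2
        + 96 * sqrt (INR n) ^ 5 * max_abs n p X0)
       * norm2 (n - 1) (fun i => w1 i - w2 i).
Proof.
  intros Hmu [Hr0 _] w1 w2 HG1 Hr1 HG2 Hr2.
  assert (Hn : (2 <= n)%nat).
  { destruct (Nat.le_gt_cases 2 n) as [H|H]; [exact H|].
    replace (n - 1)%nat with 0%nat in Hr1 by lia.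
    unfold norm2, sumR in Hr1. simpl in Hr1. rewrite sqrt_0 in Hr1. lra. }
  assert (Hlt : forall w, in_Gamma n w -> r <= norm2 (n-1) w -> 0 < sqnorm (n-1) w < 1).
  { intros w HG Hrw. split; [rewrite <- norm2_mul_norm2; nra|].
    pose proof (sqnorm_lt_on_Gamma n w ltac:(lia) HG).
    assert (0 < INR n) by (apply lt_0_INR; lia).
    pose proof (Rinv_0_lt_compat (4 * INR n) ltac:(lra)). lra. }
  pose proof (Hlt w1 HG1 Hr1) as HN1. pose proof (Hlt w2 HG2 Hr2) as HN2.
  rewrite !hess_quad_g_obj by (assumption || lia).
  unfold rayleigh. rewrite <- Rmult_minus_distr_l, <- sumR_minus.
  pose proof (max_abs_nonneg n p X0) as HM.
  assert (Ha : 0 <= 2 * sqrt (INR n)) by (pose proof (sqrt_pos (INR n)); lra).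
  apply Rle_trans with
    (rayleigh_lipschitz_const n mu r (2 * sqrt (INR n)) (max_abs n p X0)
     * norm2 (n - 1) (fun i => w1 i - w2 i)).
  - apply average_abs_le.
    + apply Rmult_le_pos; [apply rayleigh_lipschitz_const_nonneg|apply norm2_nonneg]; assumption.
    + intros k Hk. apply rayleigh_term_sub_le; try lia; try lra;
        (apply HN1 || apply HN2 || (apply qlast_gt_on_Gamma; [lia|assumption])).
  - apply Rmult_le_compat_r; [apply norm2_nonneg|].
    apply rayleigh_lipschitz_const_le; assumption.
Qed.
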